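(* Let $G$ be a finite group and $\pi$ a set of primes. For $q\in\pi$, let $\mathcal{S}_q(G_\pi)$ denote the union of all conjugacy classes $g^G$ with $g$ a $\pi$-element of $G$ such that $|g^G|$ is a power of $q$ (including $q^0=1$). Then for every $q\in\pi$, $$|\mathcal{S}_q(G_\pi)|_q=|\mathbf{Z}_\infty(G)|_q.$$ In particular, for $q\in\pi$, a Sylow $q$-subgroup of $G$ is hypercentral (i.e. contained in $\mathbf{Z}_\infty(G)$) if and only if $|G|_q=|\mathcal{S}_q(G_\pi)|_q$.
   Context: A $\pi$-element is an element whose order is divisible only by primes in $\pi$. For a positive integer $n$ and prime $q$, $n_q$ denotes the largest power of $q$ dividing $n$. $|g^G|=|G:C_G(g)|$. The hypercentre $\mathbf{Z}_\infty(G)$ is the last term of the upper central series $1\le\mathbf{Z}_1(G)\le\mathbf{Z}_2(G)\le\cdots$, with $\mathbf{Z}_1(G)=\mathbf{Z}(G)$ and $\mathbf{Z}_{i+1}(G)/\mathbf{Z}_i(G)=\mathbf{Z}(G/\mathbf{Z}_i(G))$. *)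

From mathcomp Require Import all_boot all_order all_fingroup all_solvable.
Set Implicit Arguments. Unset Strict Implicit. Unset Printing Implicit Defensive.
Local Open Scope group_scope.

(* Hypercentre Z_oo(G): the terminal term of the upper central series.
   The series 'Z_0(G) <= 'Z_1(G) <= ... strictly increases until it
   stabilises, so it is stationary from step #|G| on. *)
Definition hypercenter (gT : finGroupType) (G : {set gT}) : {set gT} :=
  'Z_#|G|(G).

Definition Sq_pi (gT : finGroupType) (G : {set gT}) (pi : nat_pred) (q : nat)
  : {set gT} :=
  [set x in G | pi.-elt x && q.-nat #|x ^: G|].

(* Induction on |G|.  If q divides |Z(G)|, choose a central subgroup N of
   order q.  For x in G the class sizes |x^G| and |(xN)^(G/N)| have the same
   q'-part: the preimage D of C_{G/N}(xN) satisfies |D : C_G(x)| = q^k,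
   because a q'-element y of D has [x, y] in the central q-group N, and
   [x, y]^#[y] = [x, y^#[y]] = 1 forces [x, y] = 1.  Hence S_q(G) and
   Z_oo(G) are the full preimages of S_q(G/N) and Z_oo(G/N), and both
   cardinals are multiplied by |N|.
   If q does not divide |Z(G)|, it does not divide |Z_oo(G)| either, since a
   nontrivial normal q-subgroup of the hypercentre meets Z(G).  A Sylow
   q-subgroup P acting by conjugation on S_q(G) fixes exactly the central
   pi-elements, so |S_q(G)| = |O_pi(Z(G))| mod q, which is prime to q. *)

From mathcomp Require Import all_boot all_order all_fingroup all_solvable.
Set Implicit Arguments. Unset Strict Implicit. Unset Printing Implicit Defensive.
Local Open Scope group_scope.

Section UpperCentralSeries.

Variables (gT : finGroupType) (G : {group gT}).

Lemma ucn_stable k m : 'Z_k(G) = 'Z_k.+1(G) -> k <= m -> 'Z_m(G) = 'Z_k(G).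
Proof.
move=> Zk_fix /subnK <-; elim: (m - k) => // j IHj.
by rewrite addSn ucnSn IHj -ucnSn.
Qed.

Lemma ucn_card_or_stable k :
  k < #|'Z_k(G)| \/ exists2 i, i < k & 'Z_i(G) = 'Z_i.+1(G).
Proof.
elim: k => [|k [ltkZ | [i ltik Zi_fix]]]; first by left; rewrite ucn0 cards1.
- have [Zk_fix | Zk_grows] := eqVneq 'Z_k(G) 'Z_k.+1(G); first by right; exists k.
  left; apply: leq_ltn_trans ltkZ (proper_card _).
  by rewrite properEneq Zk_grows ucn_subS.
- by right; exists i => //; apply: ltnW.
Qed.

Lemma hypercenterE m : #|G| <= m -> 'Z_m(G) = hypercenter G.
Proof.
move=> leGm; have [ltGZ | [i ltiG Zi_fix]] := ucn_card_or_stable #|G|.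
  by have := subset_leq_card (ucn_sub #|G| G); rewrite leqNgt ltGZ.
by rewrite /hypercenter !(ucn_stable Zi_fix) // ltnW // (leq_trans ltiG).
Qed.

Lemma ucn_meet_Z k (H : {group gT}) :
  H <| G -> H \subset 'Z_k(G) -> H :!=: 1 -> H :&: 'Z(G) != 1.
Proof.
elim: k H => [|k IHk] H nsHG sHZ ntH; first by rewrite ucn0 subG1 (negPf ntH) in sHZ.
have [/commG1P cHG | ntHG] := eqVneq [~: H, G] 1.
  by rewrite (setIidPl _) // subsetI normal_sub // centsC.
have nsHG_G : [~: H, G] <| G.
  by rewrite /normal commg_normr commg_subr (subset_trans (normal_sub nsHG) (normG G)).
have sHG_H : [~: H, G] \subset H by rewrite commg_subl normal_norm.
have sHG_Z : [~: H, G] \subset 'Z_k(G) := subset_trans (commSg _ sHZ) (ucn_comm k G).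
apply: contraNneq (IHk _ nsHG_G sHG_Z ntHG) => trivHZ.
by rewrite -subG1 -trivHZ setSI.
Qed.

Lemma ucn_pgroup pi k : pi.-group 'Z(G) -> pi.-group 'Z_k(G).
Proof.
move=> piZ; set Q := 'O_pi^'('Z_k(G)).
have nsQG : Q <| G := char_normal_trans (pcore_char _ _) (ucn_normal k G).
have trivQZ : Q :&: 'Z(G) = 1.
  by rewrite coprime_TIg // (pnat_coprime (pcore_pgroup _ _)) ?pnatNK.
have Q1 : Q :=: 1.
  by apply/eqP; apply: contraTT (ucn_meet_Z nsQG (pcore_sub _ _)) _; rewrite trivQZ.
have /and3P[_ _] := nilpotent_pcore_Hall pi^' (ucn_nilpotent k G).
by rewrite -/Q Q1 indexg1 pnatNK.
Qed.

End UpperCentralSeries.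

Lemma p'elt_commute_comm (gT : finGroupType) pi (x y : gT) :
  commute y [~ x, y] -> pi.-elt [~ x, y] -> pi^'.-elt y -> commute x y.
Proof.
move=> cyR piR pi'y; apply/commgP; rewrite -order_eq1.
have R_exp : [~ x, y] ^+ #[y] = 1 by rewrite -commgX // expg_order commg1.
apply/eqP; apply: pnat_1 piR (pnat_dvd _ pi'y).
by rewrite order_dvdn R_exp.
Qed.

Lemma pnat_index_p'elt (gT : finGroupType) pi (C D : {group gT}) :
  C \subset D -> {in D, forall y, pi^'.-elt y -> y \in C} -> pi.-nat #|D : C|.
Proof.
move=> sCD p'D_C; apply/(pnatP _ (indexg_gt0 _ _)) => p p_pr.
apply: contraLR => pi'p; have [P /and3P[sPD pP p'iP]] := Sylow_exists p D.
have sPC : P \subset C.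
  apply/subsetP=> y Py; apply: p'D_C (subsetP sPD y Py) _.
  exact: mem_p_elt (pi_pgroup pP _) Py.
rewrite -p'natE //; apply: pnat_dvd p'iP.
by rewrite -(Lagrange_index sCD sPC) dvdn_mulr.
Qed.

Lemma Sq_pi_sub (gT : finGroupType) (G : {set gT}) pi q : Sq_pi G pi q \subset G.
Proof. by apply/subsetP=> x; rewrite inE => /andP[]. Qed.

Lemma Sq_pi1 (gT : finGroupType) (G : {group gT}) pi q : 1 \in Sq_pi G pi q.
Proof. by rewrite inE group1 p_elt1 class1G cards1. Qed.

Lemma Sq_pi_norm (gT : finGroupType) (G : {group gT}) pi q :
  G \subset 'N(Sq_pi G pi q).
Proof.
apply/subsetP=> g Gg; rewrite inE; apply/subsetP=> _ /imsetP[x Sx ->].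
move: Sx; rewrite inE => /and3P[Gx pix qxG].
by rewrite inE groupJ // p_eltJ pix classGidl.
Qed.

Lemma card_cosetpre_set (gT : finGroupType) (H : {group gT}) (A : {set coset_of H}) :
  #|coset H @*^-1 A| = (#|H| * #|A|)%N.
Proof.
rewrite -sum1_card (partition_big (coset H) (mem A)) => [|x /morphpreP[]//].
rewrite mulnC -sum_nat_const; apply: eq_bigr => xbar Axbar.
have [x Nx def_xbar] := cosetP xbar; rewrite sum1dep_card def_xbar.
rewrite -(card_rcoset H x) -val_coset // -(cosetpre_set1_coset (coset H x)).
apply: eq_card => y; rewrite !inE.
apply/andP/andP=> [[/andP[Ny _] ->] | [Ny /eqP Ey]] //.
by rewrite Ny /= Ey -def_xbar.
Qed.

Section CentralQuotient.

Variables (gT : finGroupType) (G N : {group gT}).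
Hypothesis sNZ : N \subset 'Z(G).

Let nsNG : N <| G := sub_center_normal sNZ.
Let nNG : G \subset 'N(N) := normal_norm nsNG.

Lemma cosetpre_ucn_sub k : coset N @*^-1 'Z_k(G / N) \subset 'Z_k.+1(G).
Proof.
elim: k => [|k IHk]; first by rewrite ucn0 cosetpre1 ucn1.
apply/subsetP=> x /morphpreP[Nx]; rewrite (ucnSnR k (G / N)%G) inE => /andP[Gx_bar sRZ].
have Gx : x \in G by rewrite -(quotientGK nsNG) mem_morphpre.
rewrite ucnSnR inE Gx gen_subG; apply/subsetP=> _ /imset2P[_ g /set1P-> Gg ->].
have Ng := subsetP nNG g Gg; apply: (subsetP IHk).
rewrite mem_morphpre ?groupR // morphR //; apply: (subsetP sRZ).
by rewrite mem_commg ?set11 ?mem_quotient.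
Qed.

Lemma cosetpre_hypercenter : coset N @*^-1 hypercenter (G / N) = hypercenter G.
Proof.
have Z_GN := hypercenterE (leq_quotient N G); rewrite /hypercenter in Z_GN *.
apply/eqP; rewrite eqEsubset; apply/andP; split.
  rewrite -Z_GN; apply: subset_trans (cosetpre_ucn_sub _) _.
  by rewrite (hypercenterE (leqnSn _)).
apply/subsetP=> x Zx; have Nx := subsetP nNG x (subsetP (ucn_sub _ _) x Zx).
rewrite mem_morphpre // -Z_GN; apply: (subsetP (morphim_ucn _ _ _)).
exact: mem_morphim.
Qed.

Variable q : nat.
Hypothesis qN : q.-group N.

Lemma class_coset_pnat x :
  x \in G -> q.-nat #|x ^: G| = q.-nat #|coset N x ^: (G / N)|.
Proof.
move=> Gx; have Nx := subsetP nNG x Gx.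
set D := coset N @*^-1 'C_(G / N)[coset N x].
have sDG : D \subset G by rewrite -(quotientGK nsNG) morphpreS ?subsetIl.
have sCD : 'C_G[x] \subset D.
  apply/subsetP=> y /setIP[Gy /cent1P cxy]; have Ny := subsetP nNG y Gy.
  rewrite mem_morphpre //= inE mem_quotient //=.
  by apply/cent1P; rewrite /commute -!morphM // cxy.
have iGD : #|G : D| = #|G / N : 'C_(G / N)[coset N x]|.
  by rewrite -index_cosetpre quotientGK.
have qDC : q.-nat #|D : 'C_G[x]|.
  apply: pnat_index_p'elt sCD _ => y Dy q'y.
  have Gy := subsetP sDG y Dy; have Ny := subsetP nNG y Gy.
  have NR : [~ x, y] \in N.
    apply: coset_idr; first by rewrite groupR.
    case/morphpreP: Dy => _ /setIP[_ /cent1P cxy].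
    by rewrite morphR //; apply/eqP/commgP/commute_sym.
  rewrite inE Gy; apply/cent1P/commute_sym; apply: p'elt_commute_comm q'y.
    by apply/commute_sym; case/centerP: (subsetP sNZ _ NR) => _; apply.
  exact: mem_p_elt qN NR.
by rewrite -!index_cent1 -iGD -(Lagrange_index sDG sCD) pnatM qDC andbT.
Qed.

Lemma p_elt_coset pi x : pi.-group N -> x \in 'N(N) -> pi.-elt (coset N x) = pi.-elt x.
Proof.
move=> piN Nx.
by rewrite /p_elt !orderE -quotient_cycle // -!pgroupE pquotient_pgroup ?cycle_subG.
Qed.

Lemma cosetpre_Sq_pi pi : q \in pi -> coset N @*^-1 Sq_pi (G / N) pi q = Sq_pi G pi q.
Proof.
move=> qpi; apply/setP=> x; have [Gx | G'x] := boolP (x \in G); last first.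
  rewrite [RHS]inE (negPf G'x); apply: contraNF G'x => Sx.
  by rewrite -(quotientGK nsNG); apply: subsetP (morphpreS _ (Sq_pi_sub _ _ _)) x Sx.
have Nx := subsetP nNG x Gx.
rewrite inE Nx /= !inE mem_quotient //= Gx p_elt_coset ?class_coset_pnat //.
exact: pi_pgroup qN qpi.
Qed.

End CentralQuotient.

Section SylowCentralizer.

Variables (gT : finGroupType) (G : {group gT}) (q : nat).

Lemma center_cent_Sylow_pnat_class (P : {group gT}) x :
  q.-Sylow(G) P -> x \in G -> P \subset 'C[x] -> q.-nat #|x ^: G| -> x \in 'Z(G).
Proof.
move=> /and3P[sPG _ q'iP] Gx cPx qxG.
have sPC : P \subset 'C_G[x] by rewrite subsetI sPG.
have q'xG : q^'.-nat #|x ^: G|.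
  rewrite -index_cent1; apply: pnat_dvd q'iP.
  by rewrite -(Lagrange_index (subsetIl G 'C[x]) sPC) dvdn_mulr.
have CGx : 'C_G[x] = G.
  by apply: index1g (subsetIl _ _) _; rewrite index_cent1 (pnat_1 qxG q'xG).
by rewrite inE Gx -sub_cent1 -CGx subsetIr.
Qed.

Lemma Sq_pi_fix_Sylow pi (P : {group gT}) :
  q.-Sylow(G) P -> 'Fix_(Sq_pi G pi q | 'J)(P) = 'O_pi('Z(G)).
Proof.
move=> sylP; have sPG := pHall_sub sylP.
have memO x : x \in 'Z(G) -> (x \in 'O_pi('Z(G))) = pi.-elt x.
  apply: mem_normal_Hall (pcore_normal _ _).
  exact: nilpotent_pcore_Hall (abelian_nil (center_abelian G)).
apply/setP=> x; rewrite afixJ inE; apply/andP/idP => [[Sx cPx] | Ox].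
  move: Sx; rewrite inE => /and3P[Gx pix qxG].
  rewrite -sub_cent1 in cPx.
  by rewrite memO ?(center_cent_Sylow_pnat_class sylP Gx cPx qxG).
have Zx := subsetP (pcore_sub _ _) x Ox.
have /centerP[Gx cGx] := Zx.
have cGx' : G \subset 'C[x] by apply/subsetP=> g Gg; apply/cent1P/commute_sym/cGx.
split; last by rewrite -sub_cent1 (subset_trans sPG cGx').
by rewrite inE Gx -memO // Ox -index_cent1 (setIidPl cGx') indexgg.
Qed.

Lemma Sq_pi_p'nat pi :
  prime q -> q^'.-group 'Z(G) -> q^'.-nat #|Sq_pi G pi q|.
Proof.
move=> q_pr q'Z; have [P sylP] := Sylow_exists q G.
have actsP : [acts P, on Sq_pi G pi q | 'J].
  by rewrite astabsJ (subset_trans (pHall_sub sylP) (Sq_pi_norm G pi q)).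
have q'O : q^'.-nat #|'O_pi('Z(G))| := pgroupS (pcore_sub _ _) q'Z.
rewrite p'natE // /dvdn (pgroup_fix_mod (pHall_pgroup sylP) actsP).
by rewrite (Sq_pi_fix_Sylow pi sylP) -/(dvdn _ _) -p'natE.
Qed.

Lemma Sylow_sub_normal (P H : {group gT}) :
  q.-Sylow(G) P -> H <| G -> (P \subset H) = (#|H|`_q == #|G|`_q)%N.
Proof.
move=> sylP nsHG; have sylHP := Sylow_setI_normal nsHG sylP.
rewrite -(card_Hall sylP) -(card_Hall sylHP); apply/idP/eqP => [sPH | eqHP_P].
  by rewrite /= (setIidPr sPH).
have: H :&: P == P by rewrite eqEcard subsetIr eqHP_P leqnn.
by move/eqP <-; apply: subsetIl.
Qed.

End SylowCentralizer.

Lemma card_Sq_pi_part (gT : finGroupType) (G : {group gT}) (pi : nat_pred) q :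
  prime q -> q \in pi -> (#|Sq_pi G pi q|`_q = #|hypercenter G|`_q)%N.
Proof.
move=> q_pr qpi; move: {2}_.+1 (ltnSn #|G|) => n.
elim: n gT G => // n IHn gT G /ltnSE leGn.
have [qZ | q'Z] := boolP (q %| #|'Z(G)|); last first.
  rewrite -p'natE // in q'Z.
  by rewrite (part_p'nat (Sq_pi_p'nat pi q_pr q'Z)) (part_p'nat (ucn_pgroup #|G| q'Z)).
have [z Zz oz] := Cauchy q_pr qZ.
have sNZ : <[z]> \subset 'Z(G) by rewrite cycle_subG.
have qN : q.-group <[z]> by rewrite /pgroup -orderE oz pnat_id.
have ntN : <[z]> :!=: 1 by rewrite cycle_eq1 -order_gt1 oz prime_gt1.
have ltGN : #|G / <[z]>| < n.
  by rewrite (leq_trans _ leGn) // ltn_quotient ?(subset_trans sNZ (center_sub G)).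
rewrite -(cosetpre_Sq_pi sNZ qN qpi) -(cosetpre_hypercenter sNZ).
rewrite !card_cosetpre_set !partnM ?cardG_gt0 ?IHn //.
by apply/card_gt0P; exists 1; apply: Sq_pi1.
Qed.

Theorem theorem3p1 (gT : finGroupType) (G : {group gT}) (pi : nat_pred)
  (pi_primes : forall p, p \in pi -> prime p) (q : nat) (q_pi : q \in pi) :
  (#|Sq_pi G pi q|`_q = #|hypercenter G|`_q)%N /\
  (forall P : {group gT}, P \in 'Syl_q(G) ->
     (P \subset hypercenter G) <-> (#|G|`_q = #|Sq_pi G pi q|`_q)%N).
Proof.
have partSZ := card_Sq_pi_part G (pi_primes q q_pi) q_pi.
split=> // P; rewrite inE => sylP; rewrite partSZ.
by rewrite (Sylow_sub_normal sylP (ucn_normal #|G| G)) eq_sym; split=> /eqP.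
Qed.
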